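(* Let $\epsilon\in(0,1)$ and $\mu\ge1$. Let $R^*\in\arg\min_{R\in\mathcal{O}_{p\times k}}\max_{e\in\mathcal{E}}\mathbb{E}_{\mathbf{x}\sim P_e}\|\mathbf{x}-\mathbf{x}RR^\top\|_2^2$ (the population worst-case completion problem with fully observed source domains, equivalently a maxRCS solution). Let $Q_{\mathrm{target}}$ be a distribution on masks $\omega\in\{0,1\}^p$ such that, for $\omega\sim Q_{\mathrm{target}}$, the number $s$ of zero entries of $\omega$ satisfies $s\le\frac{p\epsilon}{k\mu^2(2\epsilon+1)}$ almost surely. If $R^*$ is $\mu$-incoherent, then $$\sup_{P\in\mathcal{P}}\mathcal{L}_{P,Q_{\mathrm{target}}}(R^* )\le(1+\epsilon)\min_{R\in\mathcal{O}_{p\times k}}\sup_{P\in\mathcal{P}}\mathcal{L}_{P,Q_{\mathrm{target}}}(R).$$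
   Context: $\mathcal{O}_{p\times k}=\{V\in\mathbb{R}^{p\times k}:V^\top V=I_k\}$. Source domains $\mathcal{E}=\{1,\dots,E\}$; each $P_e$ is a distribution on $\mathbb{R}^{1\times p}$ with mean zero and finite covariance $\Sigma_e=\mathbb{E}[\mathbf{x}^\top\mathbf{x}]$, $\operatorname{Tr}(\Sigma_e)>0$. $\mathcal{P}$ is the set of distributions on $\mathbb{R}^{1\times p}$ with mean zero, finite second moments and $\mathbb{E}_P[\mathbf{x}^\top\mathbf{x}]\in\operatorname{conv}(\{\Sigma_e\}_{e\in\mathcal{E}})$. $R\in\mathcal{O}_{p\times k}$ is $\mu$-incoherent if every row $R^{(i)}$ satisfies $\|R^{(i)}\|_2\le\mu\sqrt{k/p}$. For $\mathbf{x}\in\mathbb{R}^{1\times p}$, a mask $\omega\in\{0,1\}^p$ ($\omega_i=1$ meaning coordinate $i$ is observed) and $R\in\mathcal{O}_{p\times k}$, $\ell_{\mathrm{OLS}}(\mathbf{x},\omega,R)$ denotes a minimizer over $\ell\in\mathbb{R}^{1\times k}$ of $\sum_{i\in[p]:\omega_i=1}(\mathbf{x}_i-[\ell R^\top]_i)^2$ (any measurable choice of minimizer). For distributions $P$ of $\mathbf{x}$ and $Q$ of $\omega$ (with $\omega$ independent of $\mathbf{x}$), $\mathcal{L}_{P,Q}(R):=\mathbb{E}_{\mathbf{x}\sim P,\omega\sim Q}\|\mathbf{x}-\ell_{\mathrm{OLS}}(\mathbf{x},\omega,R)R^\top\|_2^2$. *)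

From HB Require Import structures.
From mathcomp Require Import all_boot all_order all_algebra.
From mathcomp Require Import all_classical all_reals all_analysis.
Set Implicit Arguments. Unset Strict Implicit. Unset Printing Implicit Defensive.
Import Order.TTheory GRing.Theory Num.Theory.
Local Open Scope ring_scope.
Local Open Scope classical_set_scope.

Section Defs.
Context {R : realType}.

Definition sqnorm (n : nat) (v : 'rV[R]_n) : R := \sum_(i < n) v ord0 i ^+ 2.

Definition in_O (p k : nat) (U : 'M[R]_(p, k)) : Prop := U^T *m U = 1%:M.

Definition incoherent (p k : nat) (mu : R) (U : 'M[R]_(p, k)) : Prop :=
  forall i : 'I_p, Num.sqrt (sqnorm (row i U)) <= mu * Num.sqrt (k%:R / p%:R).

Definition maskT (p : nat) := {ffun 'I_p -> bool}.

(* squared residual on the observed coordinates (omega_i = true = observed) *)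
Definition obs_err (p k : nat) (x : 'rV[R]_p) (w : maskT p) (U : 'M[R]_(p, k))
  (l : 'rV[R]_k) : R :=
  \sum_(i < p | w i) (x ord0 i - (l *m U^T) ord0 i) ^+ 2.

Definition ols_choice (p k : nat)
  (ls : 'rV[R]_p -> maskT p -> 'M[R]_(p, k) -> 'rV[R]_k) : Prop :=
  forall x w U l, obs_err x w U (ls x w U) <= obs_err x w U l.

Definition ols_measurable (p k : nat)
  (ls : 'rV[R]_p -> maskT p -> 'M[R]_(p, k) -> 'rV[R]_k) : Prop :=
  forall (w : maskT p) (U : 'M[R]_(p, k)) (d : measure_display)
    (T : measurableType d) (X : T -> 'rV[R]_p),
    (forall i, measurable_fun setT (fun t => X t ord0 i)) ->
    forall j, measurable_fun setT (fun t => ls (X t) w U ord0 j).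

Definition mask_dist (p : nat) (q : maskT p -> R) : Prop :=
  (forall w, 0 <= q w) /\ \sum_(w : maskT p) q w = 1.

Definition nmissing (p : nat) (w : maskT p) : nat := #|[set i | ~~ w i]|.

Definition centered_L2 d (T : measurableType d) (P : probability T R) (p : nat)
  (X : T -> 'rV[R]_p) : Prop :=
  forall i : 'I_p,
    [/\ measurable_fun setT (fun t => X t ord0 i),
        P.-integrable setT (fun t => (X t ord0 i)%:E),
        P.-integrable setT (fun t => (X t ord0 i ^+ 2)%:E) &
        (\int[P]_t (X t ord0 i)%:E = 0)%E].

Definition cov d (T : measurableType d) (P : probability T R) (p : nat)
  (X : T -> 'rV[R]_p) : 'M[R]_p :=
  \matrix_(i, j) fine (\int[P]_t (X t ord0 i * X t ord0 j)%:E).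

Definition recon_risk d (T : measurableType d) (P : probability T R) (p k : nat)
  (X : T -> 'rV[R]_p) (U : 'M[R]_(p, k)) : \bar R :=
  (\int[P]_t (sqnorm (X t - X t *m U *m U^T))%:E)%E.

Definition worst_recon d (T : measurableType d) (P : probability T R) (p k E : nat)
  (Xs : 'I_E -> T -> 'rV[R]_p) (U : 'M[R]_(p, k)) : \bar R :=
  (\big[maxe/-oo]_(e < E) recon_risk P (Xs e) U)%E.

Definition is_maxRCS d (T : measurableType d) (P : probability T R) (p k E : nat)
  (Xs : 'I_E -> T -> 'rV[R]_p) (U : 'M[R]_(p, k)) : Prop :=
  in_O U /\
  forall V : 'M[R]_(p, k), in_O V -> (worst_recon P Xs U <= worst_recon P Xs V)%E.

(* L_{P,Q}(U) for x ~ law of X under P, omega ~ q independent of x *)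
Definition compl_loss d (T : measurableType d) (P : probability T R) (p k : nat)
  (X : T -> 'rV[R]_p) (q : maskT p -> R)
  (ls : 'rV[R]_p -> maskT p -> 'M[R]_(p, k) -> 'rV[R]_k) (U : 'M[R]_(p, k)) : \bar R :=
  (\sum_(w : maskT p) (q w)%:E *
     \int[P]_t (sqnorm (X t - ls (X t) w U *m U^T))%:E)%E.

(* the class \mathcal{P}: laws of centered L2 random vectors whose second-moment
   matrix lies in conv{Sigma_e}; sup_{P in \mathcal P} L_{P,Q}(U) *)
Definition in_calP (p E : nat) (Sig : 'I_E -> 'M[R]_p)
  d (T : measurableType d) (P : probability T R) (X : T -> 'rV[R]_p) : Prop :=
  centered_L2 P X /\
  exists lam : 'I_E -> R, (forall e, 0 <= lam e) /\ \sum_(e < E) lam e = 1 /\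
    forall i j, (\int[P]_t (X t ord0 i * X t ord0 j)%:E)%E =
                ((\sum_(e < E) lam e * Sig e i j)%:E)%E.

Definition worst_compl (p k E : nat) (Sig : 'I_E -> 'M[R]_p) (q : maskT p -> R)
  (ls : 'rV[R]_p -> maskT p -> 'M[R]_(p, k) -> 'rV[R]_k) (U : 'M[R]_(p, k)) : \bar R :=
  ereal_sup [set l | exists (d : measure_display) (T : measurableType d)
                      (P : probability T R) (X : T -> 'rV[R]_p),
                      in_calP Sig P X /\ l = compl_loss P X q ls U].

End Defs.

From HB Require Import structures.
From mathcomp Require Import all_boot all_order all_algebra.
From mathcomp Require Import all_classical all_reals all_analysis.
From mathcomp Require Import measurable_realfun ring lra.
Import Order.TTheory GRing.Theory Num.Theory.
Local Open Scope ring_scope.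

Set Implicit Arguments. Unset Strict Implicit. Unset Printing Implicit Defensive.

(* For orthonormal [U] and any coefficient [l], write [x - l U^T = b - c] with
   [b = x - x U U^T] and [c = (l - x U) U^T].  As [b] is orthogonal to the
   column space of [U], the completion error is [|b|^2 + |c|^2 >= |b|^2]: the
   completion loss dominates the reconstruction risk.  If [l] is the OLS fit on
   the observed coordinates, minimality along the line through [x U] and [l]
   gives [<b, c>_obs = |c_obs|^2], hence [<b, c>_miss = -(|c|^2 - |c_miss|^2)],
   and Cauchy-Schwarz yields [(|c|^2 - |c_miss|^2)^2 <= |b|^2 |c_miss|^2].
   Incoherence bounds [|c_miss|^2 <= t |c|^2] with [t (2 eps + 1) <= eps], which
   forces [|c|^2 <= eps |b|^2].  Integrating, the completion loss of [R*] under
   any [P] in the class is at most [1 + eps] times its reconstruction risk under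
   [P]; that risk is linear in the covariance, so it is at most the worst source
   risk of [R*], at most that of [U], at most the worst completion loss of [U]
   since every source lies in the class. *)

Section RealAlgebra.
Variable R : realFieldType.

Lemma sum_mul_sqr_le n (P : pred 'I_n) (f g : 'I_n -> R) :
  (\sum_(i | P i) f i * g i) ^+ 2 <=
  (\sum_(i | P i) f i ^+ 2) * (\sum_(i | P i) g i ^+ 2).
Proof.
set A := \sum_(i | P i) f i ^+ 2; set C := \sum_(i | P i) g i ^+ 2.
set B := \sum_(i | P i) f i * g i.
have lagrange : \sum_(i | P i) \sum_(j | P j) (f i * g j - f j * g i) ^+ 2
    = 2 * (A * C - B ^+ 2).
  rewrite (eq_bigr (fun i => f i ^+ 2 * C + A * g i ^+ 2 - 2 * (f i * g i) * B)).
    rewrite sumrB big_split /= -mulr_suml -mulr_sumr -mulr_suml -/A -/C -/B.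
    by rewrite -mulr_sumr -/B; ring.
  move=> i _; rewrite /A /C /B mulr_sumr mulr_suml mulr_sumr -big_split -sumrB /=.
  by apply: eq_bigr => j _; ring.
have : 0 <= \sum_(i | P i) \sum_(j | P j) (f i * g j - f j * g i) ^+ 2.
  by apply: sumr_ge0 => i _; apply: sumr_ge0 => j _; apply: sqr_ge0.
rewrite lagrange; lra.
Qed.

Lemma sum_subZ_sqr n (P : pred 'I_n) (b c : 'I_n -> R) s :
  \sum_(i | P i) (b i - s * c i) ^+ 2 =
  \sum_(i | P i) b i ^+ 2 - 2 * s * \sum_(i | P i) b i * c i
    + s ^+ 2 * \sum_(i | P i) c i ^+ 2.
Proof. by rewrite !mulr_sumr -sumrB -big_split /=; apply: eq_bigr => i _; ring. Qed.

Lemma quadratic_min_at1 (a c : R) : 0 <= c ->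
  (forall s, c - 2 * a <= s ^+ 2 * c - 2 * s * a) -> c = a.
Proof.
rewrite le_eqVlt => /predU1P[<- min1|c_gt0 min1].
  have := min1 (1 + a); nra.
have := min1 (a / c); have aE : a = a / c * c by rewrite mulfVK ?gt_eqF.
move: (a / c) aE => u ->; nra.
Qed.

Lemma residual_energy_le (eps t B D c : R) :
  0 < eps -> 0 <= t -> t * (2 * eps + 1) <= eps ->
  0 <= B -> 0 <= c -> c <= t * D -> (D - c) ^+ 2 <= B * c ->
  D <= eps * B.
Proof.
move=> eps_gt0 t_ge0 t_small B_ge0 c_ge0 c_le Dc_le.
have t_lt1 : t < 1.
  have : 0 < 2 * eps + 1 by lra.
  nra.
have Bc_le : B * c <= B * (t * D) by rewrite ler_wpM2l.
have [D_le0|D_gt0] := lerP D 0.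
  have : t * D <= 0 by nra.
  nra.
have sqr_le : ((1 - t) * D) ^+ 2 <= B * (t * D).
  apply: le_trans Bc_le; apply: le_trans Dc_le.
  by rewrite ler_sqr ?nnegrE; nra.
have DtB : (1 - t) ^+ 2 * D <= t * B.
  rewrite -(ler_pM2r D_gt0).
  have -> : (1 - t) ^+ 2 * D * D = ((1 - t) * D) ^+ 2 by ring.
  by have -> : t * B * D = B * (t * D) by ring.
have t_le : t <= eps * (1 - t) ^+ 2 by nra.
have tB_le : t * B <= (1 - t) ^+ 2 * (eps * B) by nra.
by rewrite -(ler_pM2l (_ : 0 < (1 - t) ^+ 2)) ?exprn_gt0 ?subr_gt0 // (le_trans DtB).
Qed.

End RealAlgebra.

Section Projection.
Variable R : realType.

Lemma sqnorm_ge0 n (v : 'rV[R]_n) : 0 <= sqnorm v.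
Proof. by apply: sumr_ge0 => i _; apply: sqr_ge0. Qed.

Lemma mulmx_trE n (u v : 'rV[R]_n) :
  (u *m v^T) ord0 ord0 = \sum_i u ord0 i * v ord0 i.
Proof. by rewrite mxE; apply: eq_bigr => i _; rewrite mxE. Qed.

Variables (p k : nat) (V : 'M[R]_(p, k)) (x : 'rV[R]_p) (l : 'rV[R]_k).

Definition proj_resid := x - x *m V *m V^T.
Definition ols_shift := (l - x *m V) *m V^T.

Lemma ols_resid_split : x - l *m V^T = proj_resid - ols_shift.
Proof. by rewrite /proj_resid /ols_shift mulmxBl opprB addrA subrK. Qed.

Lemma obs_err_line (w : maskT p) s :
  obs_err x w V (x *m V + s *: (l - x *m V)) =
  \sum_(i < p | w i) (proj_resid ord0 i - s * ols_shift ord0 i) ^+ 2.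
Proof.
apply: eq_bigr => i _; rewrite mulmxDl -scalemxAl !mxE.
by congr (_ ^+ 2); ring.
Qed.

Lemma ols_shift_sqr_le i :
  ols_shift ord0 i ^+ 2 <= sqnorm (l - x *m V) * sqnorm (row i V).
Proof.
rewrite mxE /sqnorm.
under [X in _ <= _ * X]eq_bigr do rewrite mxE.
rewrite (eq_bigr (fun j => (l - x *m V) ord0 j * V i j)) => [|j _].
  exact: sum_mul_sqr_le.
by rewrite [V^T j i]mxE.
Qed.

Hypothesis VO : in_O V.

Lemma proj_resid_orth : \sum_i proj_resid ord0 i * ols_shift ord0 i = 0.
Proof.
rewrite -mulmx_trE /proj_resid /ols_shift trmx_mul trmxK mulmxA mulmxBl.
by rewrite -!mulmxA VO mulmx1 subrr mul0mx mxE.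
Qed.

Lemma sqnorm_ols_shift : sqnorm ols_shift = sqnorm (l - x *m V).
Proof.
have sqnormE n (v : 'rV[R]_n) : sqnorm v = (v *m v^T) ord0 ord0.
  by rewrite mulmx_trE; apply: eq_bigr => i _; rewrite expr2.
by rewrite !sqnormE /ols_shift trmx_mul trmxK mulmxA -(mulmxA _ V^T) VO mulmx1.
Qed.

Lemma sqnorm_ols_resid :
  sqnorm (x - l *m V^T) = sqnorm proj_resid + sqnorm (l - x *m V).
Proof.
rewrite -sqnorm_ols_shift ols_resid_split /sqnorm.
under eq_bigr do rewrite mxE [X in _ + X]mxE -[ols_shift _ _]mul1r.
by rewrite sum_subZ_sqr proj_resid_orth; ring.
Qed.

Lemma sqnorm_proj_resid_le : sqnorm proj_resid <= sqnorm (x - l *m V^T).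
Proof. by rewrite sqnorm_ols_resid lerDl sqnorm_ge0. Qed.

Lemma ols_resid_le (w : maskT p) (eps : R) :
  (forall l', obs_err x w V l <= obs_err x w V l') -> 0 < eps ->
  (\sum_(i < p | ~~ w i) sqnorm (row i V)) * (2 * eps + 1) <= eps ->
  sqnorm (x - l *m V^T) <= (1 + eps) * sqnorm proj_resid.
Proof.
move=> l_min eps_gt0 t_small.
set t := \sum_(i < p | ~~ w i) sqnorm (row i V).
set b := proj_resid ord0; set c := ols_shift ord0; set D := sqnorm (l - x *m V).
have sqr_sum_ge0 (P : pred 'I_p) (f : 'I_p -> R) : 0 <= \sum_(i | P i) f i ^+ 2.
  by apply: sumr_ge0 => i _; apply: sqr_ge0.
have obs_eq : \sum_(i | w i) c i ^+ 2 = \sum_(i | w i) b i * c i.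
  apply: quadratic_min_at1 => [|s]; first exact: sqr_sum_ge0.
  have := l_min (x *m V + s *: (l - x *m V)).
  have {1}-> : l = x *m V + 1 *: (l - x *m V) by rewrite scale1r addrC subrK.
  by rewrite !obs_err_line !sum_subZ_sqr; lra.
have cross_eq : \sum_(i | w i) b i * c i + \sum_(i | ~~ w i) b i * c i = 0.
  by have := proj_resid_orth; rewrite (bigID w).
have D_split : D = \sum_(i | w i) c i ^+ 2 + \sum_(i | ~~ w i) c i ^+ 2.
  by rewrite /D -sqnorm_ols_shift /sqnorm (bigID w).
have B_split : sqnorm proj_resid =
    \sum_(i | w i) b i ^+ 2 + \sum_(i | ~~ w i) b i ^+ 2 by rewrite /sqnorm (bigID w).
have missing_le : \sum_(i | ~~ w i) c i ^+ 2 <= t * D.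
  rewrite mulr_suml; apply: ler_sum => i _; rewrite mulrC.
  exact: ols_shift_sqr_le.
rewrite sqnorm_ols_resid -/D; suff : D <= eps * sqnorm proj_resid by lra.
apply: (residual_energy_le eps_gt0 _ t_small (sqnorm_ge0 _) (sqr_sum_ge0 _ _)
  missing_le); first by apply: sumr_ge0 => i _; apply: sqnorm_ge0.
apply: (@le_trans _ _ ((\sum_(i | ~~ w i) b i ^+ 2) * \sum_(i | ~~ w i) c i ^+ 2)).
  have -> : D - \sum_(i | ~~ w i) c i ^+ 2 = - \sum_(i | ~~ w i) b i * c i.
    by rewrite D_split obs_eq; lra.
  by rewrite sqrrN; apply: sum_mul_sqr_le.
by rewrite ler_wpM2r ?sqr_sum_ge0 // B_split lerDr sqr_sum_ge0.
Qed.

End Projection.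

Section Incoherence.
Variables (R : realType) (p k : nat) (mu : R) (V : 'M[R]_(p, k)).
Hypothesis V_inc : incoherent mu V.

Lemma incoherent_row_sqnorm_le i : sqnorm (row i V) <= mu ^+ 2 * (k%:R / p%:R).
Proof.
have row_le := V_inc i; have sqrt_ge0 := sqrtr_ge0 (sqnorm (row i V)).
move: (row_le); rewrite -ler_sqr ?nnegrE ?(le_trans sqrt_ge0 row_le) //.
by rewrite exprMn !sqr_sqrtr ?sqnorm_ge0 // divr_ge0.
Qed.

Lemma incoherent_missing_rows_le (eps : R) (w : maskT p) : 0 < eps -> 0 < mu ->
  (nmissing w)%:R <= p%:R * eps / (k%:R * mu ^+ 2 * (2 * eps + 1)) ->
  (\sum_(i < p | ~~ w i) sqnorm (row i V)) * (2 * eps + 1) <= eps.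
Proof.
move=> eps_gt0 mu_gt0 few_missing.
set c := mu ^+ 2 * (k%:R / p%:R).
have sum_le : \sum_(i < p | ~~ w i) sqnorm (row i V) <= (nmissing w)%:R * c.
  apply: le_trans (_ : \sum_(i < p | ~~ w i) c <= _).
    by apply: ler_sum => i _; apply: incoherent_row_sqnorm_le.
  rewrite (eq_bigl (fun i => i \in ([set i | ~~ w i]%classic : set 'I_p))).
    by rewrite sumr_const mulr_natl.
  by move=> i; apply/idP/idP; rewrite inE.
have e_gt0 : 0 < 2 * eps + 1 by lra.
apply: le_trans (ler_wpM2r (ltW e_gt0) sum_le) _.
(* For [p = 0] or [k = 0] the bound [c] is [0], as [x / 0 = 0]. *)
have [p0|p_gt0] := posnP p.
  by rewrite /c (_ : p%:R = 0) ?p0 // invr0 !mulr0 mul0r ltW.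
have [k0|k_gt0] := posnP k.
  by rewrite /c (_ : k%:R = 0) ?k0 // mul0r !mulr0 mul0r ltW.
apply: le_trans (_ : p%:R * eps / (k%:R * mu ^+ 2 * (2 * eps + 1)) * c
                      * (2 * eps + 1) <= _).
  by rewrite ler_wpM2r ?(ltW e_gt0) // ler_wpM2r // /c mulr_ge0 ?sqr_ge0.
suff -> : p%:R * eps / (k%:R * mu ^+ 2 * (2 * eps + 1)) * c * (2 * eps + 1) = eps
  by [].
rewrite /c; field.
by rewrite !pnatr_eq0 -!lt0n p_gt0 k_gt0 gt_eqF // gt_eqF.
Qed.

End Incoherence.

Section QuadraticForms.
Variable R : realType.

Lemma mxtrace_quad n m (M : 'M[R]_(n, m)) (S : 'M[R]_n) :
  \tr (M^T *m S *m M) = \sum_i \sum_j (M *m M^T) i j * S i j.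
Proof.
rewrite /mxtrace; under eq_bigr do rewrite !mxE.
under [RHS]eq_bigr do under eq_bigr do rewrite !mxE mulr_suml.
under eq_bigr do under eq_bigr do rewrite !mxE mulr_suml.
rewrite exchange_big [RHS]exchange_big /=; apply: eq_bigr => j _.
rewrite exchange_big /=; apply: eq_bigr => i _; apply: eq_bigr => a _.
by rewrite !mxE; ring.
Qed.

Lemma sqnorm_mulmx n m (y : 'rV[R]_n) (M : 'M[R]_(n, m)) :
  sqnorm (y *m M) = \sum_i \sum_j (M *m M^T) i j * (y ord0 i * y ord0 j).
Proof.
rewrite -[RHS](_ : \tr (M^T *m (y^T *m y) *m M) = _); last first.
  rewrite mxtrace_quad; apply: eq_bigr => i _; apply: eq_bigr => j _.
  by rewrite !mxE big_ord1 !mxE.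
rewrite -!mulmxA mulmxA -trmx_mul /mxtrace /sqnorm.
by apply: eq_bigr => i _; rewrite !mxE big_ord1 !mxE expr2.
Qed.

End QuadraticForms.

Section Integration.
Context (R : realType) (d : measure_display) (T : measurableType d).

Definition row_measurable n (Y : T -> 'rV[R]_n) :=
  forall i, measurable_fun setT (fun t => Y t ord0 i).

Lemma row_measurable_mulmx n m (Y : T -> 'rV[R]_n) (M : 'M[R]_(n, m)) :
  row_measurable Y -> row_measurable (fun t => Y t *m M).
Proof.
move=> mY i; under eq_fun do rewrite mxE.
by apply: measurable_sum => j; apply: measurable_funM => //; apply: measurable_cst.
Qed.

Lemma row_measurable_sub n (Y Z : T -> 'rV[R]_n) :
  row_measurable Y -> row_measurable Z -> row_measurable (fun t => Y t - Z t).
Proof. by move=> mY mZ i; under eq_fun do rewrite !mxE; apply: measurable_funB. Qed.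

Lemma measurable_sqnorm n (Y : T -> 'rV[R]_n) :
  row_measurable Y -> measurable_fun setT (fun t => (sqnorm (Y t))%:E).
Proof.
move=> mY; apply/measurable_EFinP; apply: measurable_sum => i.
exact: measurable_funX.
Qed.

Variable P : probability T R.

Lemma centered_L2_row_measurable n (X : T -> 'rV[R]_n) :
  centered_L2 P X -> row_measurable X.
Proof. by move=> cX i; have [] := cX i. Qed.

Lemma centered_L2_integrable_mul n (X : T -> 'rV[R]_n) i j : centered_L2 P X ->
  P.-integrable setT (fun t => (X t ord0 i * X t ord0 j)%:E).
Proof.
move=> cX; have [mi _ ii _] := cX i; have [mj _ ij _] := cX j.
apply: (le_integrable measurableT _ _ (integrableD measurableT ii ij)).
  by apply/measurable_EFinP; apply: measurable_funM.
move=> t _; rewrite -EFinD /= lee_fin (ger0_norm (x := _ + _)) ?addr_ge0 ?sqr_ge0 //.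
rewrite normrM -(real_normK (num_real (X t ord0 i))).
rewrite -(real_normK (num_real (X t ord0 j))).
have [mean_le _] := leif_mean_square_scaled `|X t ord0 i| `|X t ord0 j|.
by apply: le_trans mean_le; rewrite mulr2n lerDl mulr_ge0.
Qed.

Lemma integral_sqnorm_mulmx n m (X : T -> 'rV[R]_n) (M : 'M[R]_(n, m)) :
  centered_L2 P X ->
  (\int[P]_t (sqnorm (X t *m M))%:E = (\tr (M^T *m cov P X *m M))%:E)%E.
Proof.
move=> cX; have iXX := centered_L2_integrable_mul _ _ cX.
under eq_integral do rewrite sqnorm_mulmx -sumEFin.
rewrite integral_sum //; last first.
  move=> i; under eq_fun do rewrite -sumEFin.
  apply: integrable_sum => // j _.
  by under eq_fun do rewrite EFinM; apply: integrableZl.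
rewrite mxtrace_quad -sumEFin; apply: eq_bigr => i _.
under eq_integral do rewrite -sumEFin.
rewrite integral_sum //; last first.
  by move=> j; under eq_fun do rewrite EFinM; apply: integrableZl.
rewrite -sumEFin; apply: eq_bigr => j _.
under eq_integral do rewrite EFinM; rewrite integralZl // EFinM.
by rewrite /cov [(\matrix_(_, _) _) i j]mxE fineK // integrable_fin_num.
Qed.

End Integration.

Lemma recon_risk_cov (R : realType) d (T : measurableType d) (P : probability T R)
    p k (X : T -> 'rV[R]_p) (V : 'M[R]_(p, k)) : centered_L2 P X ->
  recon_risk P X V =
  (\tr ((1%:M - V *m V^T)^T *m cov P X *m (1%:M - V *m V^T)))%:E.
Proof.
move=> cX; rewrite -integral_sqnorm_mulmx //.
by apply: eq_integral => t _; rewrite mulmxBr mulmx1 mulmxA.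
Qed.

Section CompletionLoss.
Context (R : realType) (d : measure_display) (T : measurableType d).
Variables (P : probability T R) (p k : nat) (X : T -> 'rV[R]_p) (q : maskT p -> R)
  (ls : 'rV[R]_p -> maskT p -> 'M[R]_(p, k) -> 'rV[R]_k).
Hypotheses (cX : centered_L2 P X) (q_dist : mask_dist q)
  (ls_meas : ols_measurable ls).

Lemma measurable_ols_resid w U :
  measurable_fun setT (fun t => (sqnorm (X t - ls (X t) w U *m U^T))%:E).
Proof.
have mX := centered_L2_row_measurable cX.
apply/measurable_sqnorm/row_measurable_sub => //.
exact/row_measurable_mulmx/ls_meas.
Qed.

Lemma measurable_proj_resid (U : 'M[R]_(p, k)) :
  measurable_fun setT (fun t => (sqnorm (X t - X t *m U *m U^T))%:E).
Proof.
have mX := centered_L2_row_measurable cX.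
by apply/measurable_sqnorm/row_measurable_sub => //; do 2!apply: row_measurable_mulmx.
Qed.

Lemma mask_dist_sum_cst (r : R) : (\sum_(w : maskT p) (q w)%:E * r%:E)%E = r%:E.
Proof.
have [_ q_sum1] := q_dist.
under eq_bigr do rewrite -EFinM.
by rewrite sumEFin -mulr_suml q_sum1 mul1r.
Qed.

Lemma recon_risk_le_compl_loss U : in_O U ->
  (recon_risk P X U <= compl_loss P X q ls U)%E.
Proof.
move=> UO; have [q_ge0 _] := q_dist.
rewrite recon_risk_cov // -mask_dist_sum_cst -recon_risk_cov //.
apply: lee_sum => w _; apply: lee_wpmul2l; first by rewrite lee_fin.
apply: ge0_le_integral => //.
- by move=> t _; rewrite lee_fin sqnorm_ge0.
- exact: measurable_proj_resid.
- exact: measurable_ols_resid.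
- by move=> t _; rewrite lee_fin; apply: sqnorm_proj_resid_le.
Qed.

Lemma compl_loss_le_recon_risk (eps : R) U : in_O U -> ols_choice ls -> 0 < eps ->
  (forall w, 0 < q w ->
     (\sum_(i < p | ~~ w i) sqnorm (row i U)) * (2 * eps + 1) <= eps) ->
  (compl_loss P X q ls U <= (1 + eps)%:E * recon_risk P X U)%E.
Proof.
move=> UO ls_min eps_gt0 few_missing; have [q_ge0 _] := q_dist.
have /measurable_EFinP m_resid := measurable_proj_resid U.
have r_ge0 t : 0 <= sqnorm (X t - X t *m U *m U^T) by apply: sqnorm_ge0.
have [r risk_r] : exists r, recon_risk P X U = r%:E.
  by rewrite recon_risk_cov //; eexists.
rewrite risk_r -EFinM -mask_dist_sum_cst; apply: lee_sum => w _.
have [->|q_neq0] := eqVneq (q w) 0; first by rewrite !mul0e.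
have q_gt0 : 0 < q w by rewrite lt_neqAle eq_sym q_neq0 q_ge0.
apply: lee_wpmul2l; first by rewrite lee_fin.
rewrite EFinM -risk_r /recon_risk -ge0_integralZl_EFin //; last by lra.
apply: ge0_le_integral => //.
- by move=> t _; rewrite lee_fin sqnorm_ge0.
- exact: measurable_ols_resid.
- by apply/measurable_EFinP; apply: measurable_funM.
- by move=> t _; rewrite lee_fin; apply: ols_resid_le => //; apply: few_missing.
- by move=> t _; rewrite lee_fin.
- exact/measurable_EFinP.
Qed.

End CompletionLoss.

Lemma EFin_convex_comb_le (R : realType) E (lam r : 'I_E -> R) (W : \bar R) :
  (forall e, 0 <= lam e) -> \sum_(e < E) lam e = 1 ->
  (forall e, ((r e)%:E <= W)%E) -> ((\sum_(e < E) lam e * r e)%:E <= W)%E.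
Proof.
move=> lam_ge0 lam_sum1 r_le; case: W r_le => [w| |] r_le.
- rewrite lee_fin (le_trans (_ : _ <= \sum_(e < E) lam e * w)) //.
    by apply: ler_sum => e _; rewrite ler_wpM2l // -lee_fin.
  by rewrite -mulr_suml lam_sum1 mul1r.
- exact: leey.
- suff : \sum_(e < E) lam e = 0 by rewrite lam_sum1 => /eqP; rewrite oner_eq0.
  by apply: big1 => e _; have := r_le e; rewrite leeNy_eq.
Qed.

Lemma in_calP_cov (R : realType) p E (Sig : 'I_E -> 'M[R]_p) d
    (T : measurableType d) (P : probability T R) (X : T -> 'rV[R]_p) :
  in_calP Sig P X -> exists lam : 'I_E -> R,
    [/\ forall e, 0 <= lam e, \sum_(e < E) lam e = 1 &
        cov P X = \sum_(e < E) lam e *: Sig e].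
Proof.
move=> [_ [lam [lam_ge0 [lam_sum1 moments]]]]; exists lam; split => //.
apply/matrixP => i j; rewrite mxE moments /= summxE.
by apply: eq_bigr => e _; rewrite mxE.
Qed.

Section WorstCase.
Context (R : realType) (d : measure_display) (T : measurableType d).
Variables (Ps : probability T R) (p k E : nat) (Xs : 'I_E -> T -> 'rV[R]_p).
Hypothesis cXs : forall e, centered_L2 Ps (Xs e).

Local Notation Sig := (fun e => cov Ps (Xs e)).

Lemma source_in_calP e : in_calP Sig Ps (Xs e).
Proof.
split; first exact: cXs.
exists (fun e' => (e' == e)%:R); split; first by move=> e'; rewrite ler0n.
have pick_e (F : 'I_E -> R) : \sum_(e' < E) (e' == e)%:R * F e' = F e.
  by rewrite (bigD1 e) //= eqxx mul1r big1 ?addr0 // => e' /negbTE ->; rewrite mul0r.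
split.
  by rewrite -[RHS](pick_e (fun=> 1)); apply: eq_bigr => e' _; rewrite mulr1.
move=> i j; rewrite pick_e mxE fineK //.
exact/integrable_fin_num/centered_L2_integrable_mul.
Qed.

Lemma recon_risk_calP_le d' (T' : measurableType d') (P : probability T' R)
    (X : T' -> 'rV[R]_p) (V : 'M[R]_(p, k)) :
  in_calP Sig P X -> (recon_risk P X V <= worst_recon Ps Xs V)%E.
Proof.
move=> XP; have [lam [lam_ge0 lam_sum1 covE]] := in_calP_cov XP.
rewrite recon_risk_cov; last exact: XP.1.
rewrite [cov _ _]covE mulmx_sumr mulmx_suml [X in X%:E]raddf_sum.
rewrite (eq_bigr (fun e => lam e * \tr ((1%:M - V *m V^T)^T *m cov Ps (Xs e)
  *m (1%:M - V *m V^T)))) => [|e _]; last by rewrite -scalemxAr -scalemxAl -mxtraceZ.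
apply: EFin_convex_comb_le => // e; rewrite -recon_risk_cov //.
exact: (le_bigmax -oo%E (fun e => recon_risk Ps (Xs e) V) e).
Qed.

Variables (q : maskT p -> R) (ls : 'rV[R]_p -> maskT p -> 'M[R]_(p, k) -> 'rV[R]_k).
Hypotheses (q_dist : mask_dist q) (ls_meas : ols_measurable ls).

Lemma worst_recon_le_worst_compl U : in_O U ->
  (worst_recon Ps Xs U <= worst_compl Sig q ls U)%E.
Proof.
move=> UO; apply: bigmax_le => [|e _]; first exact: leNye.
apply: le_trans (recon_risk_le_compl_loss (cXs e) q_dist ls_meas UO) _.
by apply: ereal_sup_ubound; exists d, T, Ps, (Xs e); split => //; apply: source_in_calP.
Qed.

Lemma worst_compl_le_worst_recon (eps : R) U : in_O U -> ols_choice ls -> 0 < eps ->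
  (forall w, 0 < q w ->
     (\sum_(i < p | ~~ w i) sqnorm (row i U)) * (2 * eps + 1) <= eps) ->
  (worst_compl Sig q ls U <= (1 + eps)%:E * worst_recon Ps Xs U)%E.
Proof.
move=> UO ls_min eps_gt0 few_missing.
apply: ge_ereal_sup => _ [d' [T' [P [X [XP ->]]]]].
apply: le_trans (compl_loss_le_recon_risk XP.1 q_dist ls_meas UO ls_min eps_gt0
  few_missing) _.
by apply: lee_wpmul2l; [rewrite lee_fin; lra | apply: recon_risk_calP_le].
Qed.

End WorstCase.

Theorem mainTheorem8 (R : realType) (p k E : nat) (eps mu : R)
  (d : measure_display) (T : measurableType d) (Ps : probability T R)
  (Xs : 'I_E -> T -> 'rV[R]_p) (Rstar : 'M[R]_(p, k))
  (q : maskT p -> R) (ls : 'rV[R]_p -> maskT p -> 'M[R]_(p, k) -> 'rV[R]_k) :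
  (0 < E)%N -> 0 < eps < 1 -> 1 <= mu ->
  (forall e, centered_L2 Ps (Xs e)) ->
  (forall e, 0 < \tr (cov Ps (Xs e))) ->
  is_maxRCS Ps Xs Rstar ->
  mask_dist q ->
  (forall w, 0 < q w ->
     (nmissing w)%:R <= p%:R * eps / (k%:R * mu ^+ 2 * (2 * eps + 1))) ->
  ols_choice ls -> ols_measurable ls ->
  incoherent mu Rstar ->
  forall U : 'M[R]_(p, k), in_O U ->
    (worst_compl (fun e => cov Ps (Xs e)) q ls Rstar
       <= (1 + eps)%:E * worst_compl (fun e => cov Ps (Xs e)) q ls U)%E.
Proof.
move=> _ /andP[eps_gt0 _] mu_ge1 cXs _ [RO R_min] q_dist few_missing ls_min
  ls_meas R_inc U UO.
have mu_gt0 : 0 < mu by apply: lt_le_trans mu_ge1.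
apply: le_trans (worst_compl_le_worst_recon cXs q_dist ls_meas RO ls_min eps_gt0
  (fun w qw => incoherent_missing_rows_le R_inc eps_gt0 mu_gt0 (few_missing w qw))) _.
apply: lee_wpmul2l; first by rewrite lee_fin; lra.
exact: le_trans (R_min U UO) (worst_recon_le_worst_compl cXs q_dist ls_meas UO).
Qed.
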